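(* Let $(X,\sigma,\tau)$ be a separable, chronologically dense Lorentzian metric space satisfying the S-property, and let $(P,F),(P',F')\in\overline{X}$ with $F\neq\emptyset\neq P'$. Then there exist a past chain $\{q_n\}$ with $F=I^+[\{q_n\}]$ and a future chain $\{p'_n\}$ with $P'=I^-[\{p'_n\}]$; for any such chains the limit $\lim_n\tau(q_n,p'_n)$ exists in $[0,\infty]$, and it does not depend on the choice of the chains. Consequently $\overline{\tau}:\overline X\times\overline X\to[0,\infty]$ is well defined.
   Context: A Lorentzian metric space $(X,\sigma,\tau)$ is a topological space with $\tau:X\times X\to[0,\infty]$ lower semicontinuous and satisfying $\tau(x,z)\geq\tau(x,y)+\tau(y,z)$ whenever $\tau(x,y),\tau(y,z)>0$. Write $x\ll y$ iff $\tau(x,y)>0$, $I^+(x)=\{y:x\ll y\}$, $I^-(x)=\{y:y\ll x\}$, $I^\pm[A]=\bigcup_{a\in A}I^\pm(a)$. Future (resp. past) chain: $x_n\ll x_{n+1}$ (resp. $x_{n+1}\ll x_n$) for all $n$. Separable: there is a countable $S$ with $x\ll y\Rightarrow\exists s\in S$, $x\ll s\ll y$. Chronologically dense: every $x$ with $I^-(x)\neq\emptyset$ (resp. $I^+(x)\neq\emptyset$) is the $\sigma$-limit of a future (resp. past) chain. Past set: $P=I^-[P]$; $\downarrow S=I^-[\{p:p\ll q\ \forall q\in S\}]$; IP: past set not the union of two proper past subsets; PIP: IP of the form $I^-(p)$; future sets, $\uparrow S$, IF, PIF dually. For nonempty IP $P$ and IF $F$, $P\sim_S F$ iff $P$ is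 a maximal IP in $\downarrow F$ and $F$ a maximal IF in $\uparrow P$; $P\sim_S\emptyset$ (resp. $\emptyset\sim_S F$) if the nonempty $P$ (resp. $F$) is S-related to no nonempty IF (resp. IP). S-property: for every $x$, $I^-(x)\sim_S I^+(x)$, and no PIF other than $I^+(x)$ (resp. PIP other than $I^-(x)$) is S-related to $I^-(x)$ (resp. $I^+(x)$). c-completion $\overline X=\{(P,F):P\sim_S F\}$. The map $\overline\tau$ is defined by $\overline\tau((P,F),(P',F'))=0$ if $F=\emptyset$ or $P'=\emptyset$, and $\overline\tau((P,F),(P',F'))=\lim_n\tau(q_n,p'_n)$ otherwise, with chains as in the claim. *)

From HB Require Import structures.
From mathcomp Require Import all_boot all_order all_algebra.
From mathcomp Require Import all_classical all_reals all_analysis.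
Set Implicit Arguments. Unset Strict Implicit. Unset Printing Implicit Defensive.
Import Order.TTheory GRing.Theory Num.Theory.
Local Open Scope classical_set_scope.
Local Open Scope ereal_scope.

Section LMS.
Context {R : realType} {X : topologicalType}.
Variable tau : X -> X -> \bar R.

Definition lorentzian_metric_space : Prop :=
  (forall x y, 0 <= tau x y) /\
  lower_semicontinuous (fun z : X * X => tau z.1 z.2) /\
  (forall x y z, 0 < tau x y -> 0 < tau y z -> tau x y + tau y z <= tau x z).

Definition chron (x y : X) : Prop := 0 < tau x y.

Definition Ifut (x : X) : set X := [set y | chron x y].
Definition Ipast (x : X) : set X := [set y | chron y x].
Definition IfutS (A : set X) : set X := \bigcup_(a in A) Ifut a.
Definition IpastS (A : set X) : set X := \bigcup_(a in A) Ipast a.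

Definition future_chain (s : nat -> X) : Prop := forall n, chron (s n) (s n.+1).
Definition past_chain (s : nat -> X) : Prop := forall n, chron (s n.+1) (s n).

Definition lms_separable : Prop :=
  exists S : set X, countable S /\
    forall x y, chron x y -> exists2 s, S s & chron x s /\ chron s y.

Definition chron_dense : Prop :=
  (forall x, Ipast x !=set0 -> exists s, future_chain s /\ s @ \oo --> x) /\
  (forall x, Ifut x !=set0 -> exists s, past_chain s /\ s @ \oo --> x).

Definition past_set (P : set X) : Prop := P = IpastS P.
Definition future_set (F : set X) : Prop := F = IfutS F.

Definition down (S : set X) : set X := IpastS [set p | forall q, S q -> chron p q].
Definition up (S : set X) : set X := IfutS [set p | forall q, S q -> chron q p].

Definition isIP (P : set X) : Prop :=
  past_set P /\
  ~ (exists P1 P2, past_set P1 /\ past_set P2 /\ P1 `<` P /\ P2 `<` P /\ P = P1 `|` P2).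
Definition isIF (F : set X) : Prop :=
  future_set F /\
  ~ (exists F1 F2, future_set F1 /\ future_set F2 /\ F1 `<` F /\ F2 `<` F /\ F = F1 `|` F2).

Definition maximal_IP_in (P A : set X) : Prop :=
  isIP P /\ P `<=` A /\ forall P', isIP P' -> P `<=` P' -> P' `<=` A -> P' = P.
Definition maximal_IF_in (F A : set X) : Prop :=
  isIF F /\ F `<=` A /\ forall F', isIF F' -> F `<=` F' -> F' `<=` A -> F' = F.

Definition Srel_ne (P F : set X) : Prop :=
  P !=set0 /\ F !=set0 /\ isIP P /\ isIF F /\
  maximal_IP_in P (down F) /\ maximal_IF_in F (up P).

Definition Srel (P F : set X) : Prop :=
  Srel_ne P F \/
  (P !=set0 /\ F = set0 /\ isIP P /\
     forall F', F' !=set0 -> isIF F' -> ~ Srel_ne P F') \/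
  (P = set0 /\ F !=set0 /\ isIF F /\
     forall P', P' !=set0 -> isIP P' -> ~ Srel_ne P' F).

Definition S_property : Prop :=
  forall x,
    Srel (Ipast x) (Ifut x) /\
    (forall y, isIF (Ifut y) -> Srel (Ipast x) (Ifut y) -> Ifut y = Ifut x) /\
    (forall y, isIP (Ipast y) -> Srel (Ipast y) (Ifut x) -> Ipast y = Ipast x).

Definition c_completion : set (set X * set X) := [set PF | Srel PF.1 PF.2].

End LMS.

From HB Require Import structures.
From mathcomp Require Import all_boot all_order all_algebra.
From mathcomp Require Import all_classical all_reals all_analysis.
Set Implicit Arguments. Unset Strict Implicit. Unset Printing Implicit Defensive.
Import Order.TTheory GRing.Theory Num.Theory.
Local Open Scope classical_set_scope.
Local Open Scope ereal_scope.

(* An IP is directed, since otherwise it splits into the two proper past sets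
   of points not in the future of p, resp. q. Enumerating a countable dense
   set and repeatedly choosing common upper bounds then gives a future chain
   that is cofinal in the IP; dually every nonempty IF is generated by a past
   chain. By the reverse triangle inequality, tau (q n) (p' n) is
   nondecreasing along a past chain q and a future chain p', so it converges
   to its supremum; two pairs of chains generating the same F and P' are
   mutually cofinal, so the suprema coincide. *)

Section IndecomposablePastSets.
Context {R : realType} {X : topologicalType}.
Variable tau : X -> X -> \bar R.
Hypothesis chron_trans :
  forall x y z, chron tau x y -> chron tau y z -> chron tau x z.

Lemma past_set_ub (P : set X) y :
  past_set tau P -> P y -> exists2 a, P a & chron tau y a.
Proof. by move=> PP; rewrite {1}PP => -[a Pa ya]; exists a. Qed.

Lemma past_set_down (P : set X) y a :
  past_set tau P -> P a -> chron tau y a -> P y.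
Proof. by move=> PP Pa ya; rewrite PP; exists a. Qed.

Lemma IpastS_past_set (A : set X) :
  (forall x y, chron tau x y -> exists s, chron tau x s /\ chron tau s y) ->
  past_set tau (IpastS tau A).
Proof.
move=> interp; apply/seteqP; split.
- by move=> y [a Aa /interp [s [ys sa]]]; exists s => //; exists a.
- by move=> y [b [a Aa ba] yb]; exists a => //; exact: chron_trans yb ba.
Qed.

Lemma IP_directed (P : set X) :
  (forall x y, chron tau x y -> exists s, chron tau x s /\ chron tau s y) ->
  isIP tau P -> forall p q, P p -> P q ->
  exists r, [/\ P r, chron tau p r & chron tau q r].
Proof.
move=> interp [PP nsplit] p q Pp Pq; apply: contrapT => nodir; apply: nsplit.
pose A u := IpastS tau (P `&` ~` Ifut tau u).
have A_sub u : A u `<=` P.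
  by move=> y [a [Pa _] ya]; exact: past_set_down PP Pa ya.
have A_proper u : P u -> A u `<` P.
  move=> Pu; split=> // PA; have [c Pc uc] := past_set_ub PP Pu.
  have [a [_ na] ca] := PA _ Pc; exact/na/(chron_trans uc ca).
exists (A p), (A q); do 2 (split; first exact: IpastS_past_set).
do 2 (split; first exact: A_proper).
apply/seteqP; split; last by move=> y [] /A_sub.
move=> y Py; have [a Pa ya] := past_set_ub PP Py.
case: (pselect (Ifut tau p a)) => hp; last by left; exists a.
case: (pselect (Ifut tau q a)) => hq; last by right; exists a.
by exfalso; apply: nodir; exists a.
Qed.

Lemma IP_future_chain (P : set X) :
  lms_separable tau -> isIP tau P -> P !=set0 ->
  exists p : nat -> X, future_chain tau p /\ P = IpastS tau (range p).
Proof.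
move=> [S [cS HS]] IPP [p0 Pp0]; have PP := IPP.1.
have /IP_directed dir : forall x y, chron tau x y ->
    exists s, chron tau x s /\ chron tau s y.
  by move=> x y /HS [s _ h]; exists s.
have [e Se] : exists e : nat -> X, S `<=` range e.
  move/pfcard_geP: cS => [->|[g]]; first by exists (fun=> p0).
  by exists g => s /(@surj _ _ _ _ g) [n _ <-]; exists n.
have /choice [f Hf] : forall nu : nat * X, exists z, P nu.2 ->
    [/\ P z, chron tau nu.2 z & P (e nu.1) -> chron tau (e nu.1) z].
  move=> [n u] /=; case: (pselect (P u)) => Pu; last by exists u.
  case: (pselect (P (e n))) => Pe.
  - by have [r [Pr ur er]] := dir P IPP _ _ Pu Pe; exists r.
  - by have [r Pr ur] := past_set_ub PP Pu; exists r.
pose p := fix p n := if n is n'.+1 then f (n', p n') else p0.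
have Pp n : P (p n) by elim: n => //= n IH; have [] := Hf (n, p n) IH.
exists p; split; first by move=> n; have [] := Hf (n, p n) (Pp n).
apply/seteqP; split; last by move=> y [_ [n _ <-]]; exact: past_set_down.
move=> y /(past_set_ub PP) [a Pa /HS [s Ss [ys sa]]].
have [n _ en] := Se _ Ss.
exists (p n.+1); first by exists n.+1.
have [_ _ /= ens] := Hf (n, p n) (Pp n).
apply: chron_trans ys _; rewrite -en; apply: ens.
by rewrite en; exact: past_set_down sa.
Qed.

End IndecomposablePastSets.

Section TimeReversal.
Context {R : realType} {X : topologicalType}.
Variable tau : X -> X -> \bar R.

Local Notation tau_rev := (fun x y => tau y x).

Lemma lms_separable_rev : lms_separable tau -> lms_separable tau_rev.
Proof.
move=> [S [cS HS]]; exists S; split=> // x y /HS [s Ss [xs sy]].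
by exists s.
Qed.

Lemma IF_past_chain (F : set X) :
  (forall x y z, chron tau x y -> chron tau y z -> chron tau x z) ->
  lms_separable tau -> isIF tau F -> F !=set0 ->
  exists q : nat -> X, past_chain tau q /\ F = IfutS tau (range q).
Proof.
move=> chron_trans /lms_separable_rev sep.
apply: (IP_future_chain (tau := tau_rev)) sep => x y z xy yz.
exact: chron_trans yz xy.
Qed.

End TimeReversal.

Section Completion.
Context {R : realType} {X : topologicalType}.
Variable tau : X -> X -> \bar R.

Lemma c_completion_isIF (P F : set X) :
  c_completion tau (P, F) -> F !=set0 -> isIF tau F.
Proof.
rewrite /c_completion /=.
by case=> [[_ [_ [_ []]]]|[[_ [-> _]] [] //|[_ [_ []]]]].
Qed.

Lemma c_completion_isIP (P F : set X) :
  c_completion tau (P, F) -> P !=set0 -> isIP tau P.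
Proof.
rewrite /c_completion /=.
by case=> [[_ [_ []]]|[[_ [_ []]]|[-> _] [] //]].
Qed.

End Completion.

Section TauAlongChains.
Context {R : realType} {X : topologicalType}.
Variable tau : X -> X -> \bar R.
Hypothesis lms : lorentzian_metric_space tau.

Let tau_ge0 := lms.1.
Let tau_rev_tri := lms.2.2.

Lemma lms_chron_trans x y z : chron tau x y -> chron tau y z -> chron tau x z.
Proof.
move=> xy yz; apply: lt_le_trans (tau_rev_tri xy yz).
exact/(lt_le_trans xy)/leeDl.
Qed.

Lemma tau_le_past a b c : chron tau c a -> tau a b <= tau c b.
Proof.
move=> ca; move: (tau_ge0 a b); rewrite le_eqVlt => /predU1P[<-|ab].
  exact: tau_ge0.
exact/(le_trans _ (tau_rev_tri ca ab))/leeDr.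
Qed.

Lemma tau_le_future a b d : chron tau b d -> tau a b <= tau a d.
Proof.
move=> bd; move: (tau_ge0 a b); rewrite le_eqVlt => /predU1P[<-|ab].
  exact: tau_ge0.
exact/(le_trans _ (tau_rev_tri ab bd))/leeDl.
Qed.

Section Chains.
Variables (q p : nat -> X).
Hypotheses (qc : past_chain tau q) (pc : future_chain tau p).

Lemma tau_chains_le i j i' j' :
  (i <= i')%N -> (j <= j')%N -> tau (q i) (p j) <= tau (q i') (p j').
Proof.
move=> ii' jj'; apply: (@le_trans _ _ (tau (q i') (p j))).
- by move: i i' ii'; apply/nondecreasing_seqP => n; exact: tau_le_past.
- by move: j j' jj'; apply/nondecreasing_seqP => n; exact: tau_le_future.
Qed.

Lemma tau_chains_cvg :
  (fun n => tau (q n) (p n)) @ \oo -->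
  ereal_sup (range (fun n => tau (q n) (p n))).
Proof. by apply: ereal_nondecreasing_cvgn => m n mn; exact: tau_chains_le. Qed.

Lemma past_chain_IfutS n : IfutS tau (range q) (q n).
Proof. by exists (q n.+1); [exists n.+1 | exact: qc]. Qed.

Lemma future_chain_IpastS n : IpastS tau (range p) (p n).
Proof. by exists (p n.+1); [exists n.+1 | exact: pc]. Qed.

End Chains.

Lemma ereal_sup_tau_chains_le (q p r s : nat -> X) :
  past_chain tau q -> future_chain tau p ->
  past_chain tau r -> future_chain tau s ->
  IfutS tau (range q) `<=` IfutS tau (range r) ->
  IpastS tau (range p) `<=` IpastS tau (range s) ->
  ereal_sup (range (fun n => tau (q n) (p n))) <=
  ereal_sup (range (fun n => tau (r n) (s n))).
Proof.
move=> qc pc rc sc qr ps; apply: ge_ereal_sup => _ [n _ <-].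
have [_ [m _ <-] rq] := qr _ (past_chain_IfutS qc n).
have [_ [k _ <-] ps'] := ps _ (future_chain_IpastS pc n).
apply: le_trans (ereal_sup_ubound _); last by exists (m + k)%N.
apply: le_trans (tau_le_past _ rq) _; apply: le_trans (tau_le_future _ ps') _.
by apply: tau_chains_le; rewrite ?leq_addr ?leq_addl.
Qed.

End TauAlongChains.

Theorem mainTheorem15 (R : realType) (X : topologicalType) (tau : X -> X -> \bar R) :
  lorentzian_metric_space tau ->
  lms_separable tau ->
  chron_dense tau ->
  S_property tau ->
  forall P F P' F' : set X,
    c_completion tau (P, F) -> c_completion tau (P', F') ->
    F !=set0 -> P' !=set0 ->
    (exists q : nat -> X, past_chain tau q /\ F = IfutS tau (range q)) /\
    (exists p' : nat -> X, future_chain tau p' /\ P' = IpastS tau (range p')) /\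
    (exists2 L : \bar R, 0 <= L &
       forall (q p' : nat -> X),
         past_chain tau q -> F = IfutS tau (range q) ->
         future_chain tau p' -> P' = IpastS tau (range p') ->
         (fun n => tau (q n) (p' n)) @ \oo --> L).
Proof.
move=> lms sep _ _ P F P' F' cPF cPF' Fne P'ne.
have chron_trans := lms_chron_trans lms.
have [q0 [q0c q0F]] :=
  IF_past_chain chron_trans sep (c_completion_isIF cPF Fne) Fne.
have [p0 [p0c p0P]] :=
  IP_future_chain chron_trans sep (c_completion_isIP cPF' P'ne) P'ne.
split; first by exists q0.
split; first by exists p0.
exists (ereal_sup (range (fun n => tau (q0 n) (p0 n)))).
  apply: le_trans (ereal_sup_ubound _); first exact: lms.1 (q0 0%N) (p0 0%N).
  by exists 0%N.
move=> q p qc qF pc pP.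
suff -> : ereal_sup (range (fun n => tau (q0 n) (p0 n))) =
          ereal_sup (range (fun n => tau (q n) (p n))) by exact: tau_chains_cvg.
by apply/le_anti/andP; split; apply: ereal_sup_tau_chains_le;
  rewrite // -?qF -?q0F -?pP -?p0P.
Qed.
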